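(* Let $a,b,d>0$, $c\geq c^*=-\sqrt{3bd}$, $\phi(x)=\frac{ax^3+bx^2+cx+d}{x^3}$ ($x>0$), let $\overline{t}$ be the unique equilibrium of $\phi$, and let $\{t_n\}_{n\ge0}$ be a positive solution of $t_{n+1}=\phi(t_n)$. Let $$G(x)=a^3x^6+(2a^2b-ac-d)x^5+(ab^2-ad-bc+2a^2c)x^4+(2a^2d+2abc-c^2-bd)x^3+(ac^2+2abd-2cd)x^2+(2acd-d^2)x+ad^2$$ and suppose that $G$ has no root of even multiplicity. Then: \begin{description} \item[(a)] If $\phi$ has no 2-cycle, then $\{t_n\}$ converges to $\overline{t}$. \item[(b)] If $\phi$ has one 2-cycle $(p,q)$ with $p<\overline{t}<q$, then $\{t_n\}$ converges to the 2-cycle $(p,q)$ if $t_0\neq\overline{t}$; otherwise $\{t_n\}$ converges to $\overline{t}$. \item[(c)] If $\phi$ has two 2-cycles $(p_1,q_1)$, $(p_2,q_2)$ with $p_1<p_2<\overline{t}<q_2<q_1$, then $\{t_n\}$ converges to $\overline{t}$ if $t_0\in(p_2,q_2)$, converges to the 2-cycle $(p_2,q_2)$ if $t_0\in\{p_2,q_2\}$, and otherwise converges to the 2-cycle $(p_1,q_1)$. \item[(d)] If $\phi$ has three 2-cycles $(p_1,q_1)$, $(p_2,q_2)$, $(p_3,q_3)$ with $p_1<p_2<p_3<\overline{t}<q_3<q_2<q_1$, then $\{t_n\}$ converges to the 2-cycle $(p_3,q_3)$ if $t_0\in(p_2,q_2)\setminus\{\overline{t}\}$, converges to $\overline{t}$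 if $t_0=\overline{t}$, converges to the 2-cycle $(p_2,q_2)$ if $t_0\in\{p_2,q_2\}$, and otherwise converges to the 2-cycle $(p_1,q_1)$. \end{description}
   Context: An equilibrium is $t>0$ with $\phi(t)=t$. A 2-cycle is a pair $(p,q)$ of positive numbers with $p\ne q$, $\phi(p)=q$, $\phi(q)=p$. A positive solution is a sequence with $t_0>0$ and $t_{n+1}=\phi(t_n)$. The sequence $\{t_n\}$ converges to the 2-cycle $(p,q)$ if one of the subsequences $\{t_{2n}\}$, $\{t_{2n+1}\}$ converges to $p$ and the other to $q$. *)

From HB Require Import structures.
From mathcomp Require Import all_boot all_order all_algebra.
From mathcomp Require Import all_classical all_reals all_analysis.
Set Implicit Arguments. Unset Strict Implicit. Unset Printing Implicit Defensive.
Import Order.TTheory GRing.Theory Num.Theory numFieldNormedType.Exports.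
Local Open Scope classical_set_scope.
Local Open Scope ring_scope.

Section Defs.
Variable R : realType.

Definition phi (a b c d x : R) : R :=
  (a * x ^+ 3 + b * x ^+ 2 + c * x + d) / x ^+ 3.

(* the polynomial G, coefficients listed from degree 0 to degree 6 *)
Definition Gpoly (a b c d : R) : {poly R} :=
  Poly [:: a * d ^+ 2;
           2 * a * c * d - d ^+ 2;
           a * c ^+ 2 + 2 * a * b * d - 2 * c * d;
           2 * a ^+ 2 * d + 2 * a * b * c - c ^+ 2 - b * d;
           a * b ^+ 2 - a * d - b * c + 2 * a ^+ 2 * c;
           2 * a ^+ 2 * b - a * c - d;
           a ^+ 3].

Definition no_even_mult_root (G : {poly R}) : Prop :=
  forall x : R, root G x -> odd (mup x G).

Definition equilibrium (f : R -> R) (x : R) : Prop := 0 < x /\ f x = x.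

Definition two_cycle (f : R -> R) (p q : R) : Prop :=
  0 < p /\ 0 < q /\ p <> q /\ f p = q /\ f q = p.

(* (x,y) is the same 2-cycle as (p,q) (cycles are unordered pairs) *)
Definition same_cycle (p q x y : R) : Prop :=
  (x = p /\ y = q) \/ (x = q /\ y = p).

Definition conv_cycle (u : nat -> R) (p q : R) : Prop :=
  ((fun n => u (2 * n)%N) @ \oo --> p /\ (fun n => u (2 * n).+1) @ \oo --> q)
  \/ ((fun n => u (2 * n)%N) @ \oo --> q /\ (fun n => u (2 * n).+1) @ \oo --> p).

End Defs.

From HB Require Import structures.
From mathcomp Require Import all_boot all_order all_algebra.
From mathcomp Require Import all_classical all_reals all_analysis.
From mathcomp Require Import polyrcf.
From mathcomp Require Import ring lra zify.
Import Order.TTheory GRing.Theory Num.Theory numFieldNormedType.Exports.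
Local Open Scope classical_set_scope.
Local Open Scope ring_scope.
Set Implicit Arguments. Unset Strict Implicit. Unset Printing Implicit Defensive.

(* Since c >= -sqrt(3bd), phi is decreasing on (0, +oo), so phi o phi is
   increasing and the even and odd subsequences of an orbit are monotone. Each
   converges to the fixed point of phi o phi next to its start in the direction
   given by the sign of phi (phi x) - x. Up to a positive factor this difference
   is equilibrium_poly(x) * G(x), whose first factor vanishes (on (0, +oo)) only
   at the equilibrium. Hence the sign is constant between consecutive fixed
   points, flips across every point of a 2-cycle (a root of G of odd
   multiplicity), and is reversed by phi; together with its negativity beyond
   the largest fixed point this determines the sign on every gap, from the
   outside in. *)

Section Iteration.
Variable R : realType.
Implicit Types (f : R -> R) (u : nat -> R) (l L : R).

Lemma cvg_even_odd u l :
  (fun n => u (2 * n)%N) @ \oo --> l -> (fun n => u (2 * n).+1) @ \oo --> l ->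
  u @ \oo --> l.
Proof.
move=> /cvgrPdist_lt even_l /cvgrPdist_lt odd_l; apply/cvgrPdist_lt => e e0.
have [N1 _ hN1] := even_l e e0; have [N2 _ hN2] := odd_l e e0.
exists (2 * (N1 + N2))%N => // n /= hn.
have := odd_double_half n; rewrite -addnn.
case: (odd n) => /= hnE.
  have -> : n = (2 * n./2).+1 by lia.
  by apply: hN2 => /=; lia.
have -> : n = (2 * n./2)%N by lia.
by apply: hN1 => /=; lia.
Qed.

Lemma iterate_cvg_fixpoint f u l :
  (forall n, u n.+1 = f (u n)) -> {for l, continuous f} -> u @ \oo --> l -> f l = l.
Proof.
move=> uS fl ul; have ufl : (fun n => u n.+1) @ \oo --> f l.
  by rewrite (funext uS); exact: cvg_comp ul fl.
have ul' : (fun n => u n.+1) @ \oo --> l by rewrite (cvg_shiftS u).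
exact: cvg_unique _ ufl ul'.
Qed.

Lemma iterate_cvg_from_below f u L :
  (forall n, u n.+1 = f (u n)) -> u 0%N <= L -> f L = L ->
  (forall x y, u 0%N <= x -> x <= y -> y <= L -> f x <= f y) ->
  (forall x, u 0%N <= x <= L -> {for x, continuous f}) ->
  (forall x, u 0%N <= x < L -> x < f x) ->
  u @ \oo --> L.
Proof.
move=> uS u0L fL f_mono f_cont f_up.
have u_mono n : u 0%N <= u n <= u n.+1 /\ u n.+1 <= L.
  elim: n => [|n [/andP[u0n unS] uSL]].
    rewrite lexx uS /=; split; last by rewrite -fL f_mono.
    have [->|u0L'] := eqVneq (u 0%N) L; first by rewrite fL.
    by apply/ltW/f_up; rewrite lexx lt_neqAle u0L' u0L.
  have u0S := le_trans u0n unS.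
  rewrite u0S [u n.+2]uS /=; split; last by rewrite -fL f_mono.
  by rewrite {1}uS f_mono.
have [l ul] : exists l, u @ \oo --> l.
  exists (sup (range u)); apply: nondecreasing_cvgn.
    by apply/nondecreasing_seqP => n; have [/andP[]] := u_mono n.
  by exists L => _ [n _ <-]; have [/andP[_ /le_trans]] := u_mono n; apply.
have /andP[u0l lL] : u 0%N <= l <= L.
  have cu : cvgn u by apply/cvg_ex; exists l.
  rewrite -(cvg_lim _ ul) //; apply/andP; split.
    by apply: limr_ge => //; near=> n; have [/andP[]] := u_mono n.
  by apply: limr_le => //; near=> n; have [/andP[_ /le_trans]] := u_mono n; apply.
have fl : f l = l by apply: iterate_cvg_fixpoint uS _ ul; apply: f_cont; rewrite u0l.
have [l_lt_L|] := ltP l L; last by move=> Ll; rewrite -(@le_anti _ _ l L) ?lL.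
by have := f_up l; rewrite u0l l_lt_L fl ltxx => /(_ isT).
Unshelve. all: by end_near.
Qed.

Lemma iterate_cvg_attractor f u l L r :
  (forall n, u n.+1 = f (u n)) -> l < u 0%N < r -> l < L < r -> f L = L ->
  (forall x y, l < x -> x <= y -> y < r -> f x <= f y) ->
  (forall x, l < x < r -> {for x, continuous f}) ->
  (forall x, l < x < L -> x < f x) -> (forall x, L < x < r -> f x < x) ->
  u @ \oo --> L.
Proof.
move=> uS /andP[lu0 u0r] /andP[lL Lr] fL f_mono f_cont f_up f_down.
have [u0L|Lu0] := leP (u 0%N) L.
  apply: iterate_cvg_from_below => // [x y u0x xy yL|x /andP[u0x xL]|x /andP[u0x xL]].
  - by apply: f_mono; lra.
  - by apply: f_cont; apply/andP; split; lra.
  - by apply: f_up; apply/andP; split; lra.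
(* conjugate by x |-> -x to approach the fixed point from below *)
pose g x := - f (- x); pose v n := - u n.
have vL : v @ \oo --> - L.
  apply: (@iterate_cvg_from_below g) => [n|||x y v0x xy yL|x /andP[v0x xL]|x /andP[v0x xL]].
  - by rewrite /v /g uS opprK.
  - by rewrite /v lerN2 ltW.
  - by rewrite /g opprK fL.
  - by rewrite /g lerN2; apply: f_mono; rewrite /v in v0x; lra.
  - have fx : {for - x, continuous f}.
      by apply: f_cont; rewrite /v in v0x xL; apply/andP; split; lra.
    exact: continuous_comp (continuous_comp (@oppr_continuous _ _ x) fx) (@oppr_continuous _ _ _).
  - rewrite /g ltrNr; apply: f_down; rewrite /v in v0x xL; apply/andP; split; lra.
have -> : u = (fun n => - v n) by apply/funext => n; rewrite /v opprK.
by rewrite -[L]opprK; apply: cvgN.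
Qed.

End Iteration.

Lemma sgr_horner_odd_root (R : rcfType) (p : {poly R}) (l r z x y : R) :
  p != 0 -> odd (mup z p) -> {in `]l, r[, forall w, w != z -> ~~ root p w} ->
  l < x -> x < z -> z < y -> y < r -> Num.sg p.[x] = - Num.sg p.[y].
Proof.
move=> p0 odd_mup p_roots lx xz zy yr.
have [m [q qz pE]] := multiplicity_XsubC p z; rewrite p0 /= in qz.
have mupE : mup z p = m by rewrite pE mupMr // mup_XsubCX eqxx.
have q_roots : {in `]l, r[, forall w, ~~ root q w}.
  move=> w w_in; have [->//|wz] := eqVneq w z.
  by apply: contra (p_roots w w_in wz); rewrite pE rootM => ->.
have x_in : x \in `]l, r[ by rewrite in_itv /= lx (lt_trans xz (lt_trans zy yr)).
have y_in : y \in `]l, r[ by rewrite in_itv /= yr (lt_trans lx (lt_trans xz zy)).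
have x_neg : (x - z) ^+ m < 0 by rewrite exprn_odd_lt0 -?mupE // subr_lt0.
have y_pos : 0 < (y - z) ^+ m by rewrite exprn_gt0 // subr_gt0.
rewrite pE !hornerM !horner_exp !hornerXsubC !sgrM (polyrN0_itv q_roots x_in y_in).
by rewrite (ltr0_sg x_neg) (gtr0_sg y_pos) mulrN1 mulr1.
Qed.

Lemma ge_Nsqrt_cases (R : rcfType) (k c : R) :
  0 <= k -> - Num.sqrt k <= c -> 0 <= c \/ c ^+ 2 <= k.
Proof.
move=> k0 hc; have [c0|c0] := lerP 0 c; [by left | right].
have s0 := sqrtr_ge0 k; have := sqr_sqrtr k0; nra.
Qed.

Lemma two_cycleC (R : realType) (f : R -> R) p q : two_cycle f p q -> two_cycle f q p.
Proof. by case=> p0 [q0 [pq [fp fq]]]; split=> //; split=> //; split=> // /esym. Qed.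

Lemma two_cycle_fix2 (R : realType) (f : R -> R) p q : two_cycle f p q -> f (f p) = p.
Proof. by case=> _ [_ [_ [-> ->]]]. Qed.

Lemma conv_cycleC (R : realType) (u : nat -> R) p q : conv_cycle u p q -> conv_cycle u q p.
Proof. by case; [right | left]. Qed.

Section CubicRationalMap.
Variables (R : realType) (a b c d : R).
Hypotheses (a_gt0 : 0 < a) (b_gt0 : 0 < b) (d_gt0 : 0 < d).
Hypothesis c_ge : 0 <= c \/ c ^+ 2 <= 3 * b * d.
Implicit Types x y z w : R.

Local Notation phi := (phi a b c d).
Local Notation numer x := (a * x ^+ 3 + b * x ^+ 2 + c * x + d).

Lemma phiE x : phi x = numer x / x ^+ 3.
Proof. by []. Qed.

Lemma numer_gt_cube x : 0 < x -> a * x ^+ 3 < numer x.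
Proof.
move=> x0; suff : 0 < b * x ^+ 2 + c * x + d by lra.
have bx2 : 0 < b * x ^+ 2 by rewrite mulr_gt0 ?exprn_gt0.
have := d_gt0; case: c_ge => [c0|c2]; first by have := mulr_ge0 c0 (ltW x0); lra.
have E : 4 * b * (b * x ^+ 2 + c * x + d) = (2 * b * x + c) ^+ 2 + (4 * b * d - c ^+ 2).
  by ring.
have : 0 < 4 * b * (b * x ^+ 2 + c * x + d).
  by rewrite E; have := sqr_ge0 (2 * b * x + c); have := mulr_gt0 b_gt0 d_gt0; nra.
by rewrite pmulr_rgt0 // mulr_gt0.
Qed.

Lemma numer_gt0 x : 0 < x -> 0 < numer x.
Proof.
move=> x0; have := numer_gt_cube x0.
have : 0 < a * x ^+ 3 by rewrite mulr_gt0 ?exprn_gt0.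
lra.
Qed.

Lemma phi_gt x : 0 < x -> a < phi x.
Proof. by move=> x0; rewrite phiE ltr_pdivlMr ?exprn_gt0 ?numer_gt_cube. Qed.

Lemma phi_gt0 x : 0 < x -> 0 < phi x.
Proof. by move=> /phi_gt; apply: lt_trans. Qed.

Lemma phi_decr x y : 0 < x -> x < y -> phi y < phi x.
Proof.
move=> x0 xy; have y0 : 0 < y by lra.
pose P := x * y; pose S := x + y.
pose Q := b * P ^+ 2 + c * P * S + d * (x ^+ 2 + x * y + y ^+ 2).
have P0 : 0 < P by rewrite mulr_gt0.
have Q0 : 0 < Q.
  case: c_ge => [c0|c2].
    have S0 : 0 < S by exact: addr_gt0.
    have := mulr_ge0 (mulr_ge0 c0 (ltW P0)) (ltW S0).
    have : 0 < b * P ^+ 2 by rewrite mulr_gt0 ?exprn_gt0.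
    have : 0 < d * (x ^+ 2 + x * y + y ^+ 2).
      by rewrite mulr_gt0 // !addr_gt0 ?mulr_gt0 ?exprn_gt0.
    rewrite /Q; lra.
  (* a sum of squares once c ^+ 2 <= 3 * b * d *)
  have QE : 3 * d * Q = (3 / 2 * d * S + c * P) ^+ 2 + (3 * b * d - c ^+ 2) * P ^+ 2
                        + 3 / 4 * d ^+ 2 * (x - y) ^+ 2 by rewrite /Q /S /P; field.
  have : 0 < 3 / 4 * d ^+ 2 * (x - y) ^+ 2.
    by rewrite -[(x - y) ^+ 2]sqrrN opprB !mulr_gt0 ?exprn_gt0 // subr_gt0.
  have : 0 <= (3 * b * d - c ^+ 2) * P ^+ 2 by rewrite mulr_ge0 ?sqr_ge0 ?subr_ge0.
  have := sqr_ge0 (3 / 2 * d * S + c * P).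
  have d3 : 0 < 3 * d by rewrite mulr_gt0.
  by move=> h1 h2 h3; rewrite -(pmulr_rgt0 Q d3) QE; lra.
have -> : phi y = phi x - (y - x) * Q / (x ^+ 3 * y ^+ 3).
  by rewrite !phiE /Q /P /S; field; rewrite ?gt_eqF.
by rewrite gtrBl divr_gt0 ?mulr_gt0 ?exprn_gt0 ?subr_gt0.
Qed.

Lemma phi_le x y : 0 < x -> x <= y -> phi y <= phi x.
Proof. by move=> x0; rewrite le_eqVlt => /predU1P[->//|/(phi_decr x0)/ltW]. Qed.

Lemma phi_continuous x : 0 < x -> {for x, continuous phi}.
Proof.
move=> x0; have -> : phi = horner (Poly [:: d; c; b; a]) \* (fun z => (z ^+ 3)^-1).
  by apply/funext => z; rewrite /GRing.mul_fun phiE horner_Poly /=; congr (_ / _); ring.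
apply: continuousM; first exact: continuous_horner.
by apply: continuousV; [rewrite expf_neq0 ?gt_eqF | exact: exprn_continuous].
Qed.

Lemma phi2_le x y : 0 < x -> x <= y -> phi (phi x) <= phi (phi y).
Proof.
move=> x0 xy; apply: phi_le; first exact/phi_gt0/(lt_le_trans x0).
exact: phi_le.
Qed.

Lemma phi2_continuous x : 0 < x -> {for x, continuous (fun z => phi (phi z))}.
Proof.
by move=> x0; apply: (continuous_comp (phi_continuous x0)); apply/phi_continuous/phi_gt0.
Qed.

Lemma sgr_phi2_sub_phi x :
  0 < x -> Num.sg (phi (phi (phi x)) - phi x) = - Num.sg (phi (phi x) - x).
Proof.
move=> x0; have phi2x0 : 0 < phi (phi x) by rewrite !phi_gt0.
case: (ltgtP (phi (phi x)) x) => [lt|gt|->]; last by rewrite !subrr sgr0 oppr0.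
- have : phi x < phi (phi (phi x)) := phi_decr phi2x0 lt.
  by rewrite -subr_gt0 => /gtr0_sg ->; rewrite (ltr0_sg (_ : _ - x < 0)) ?opprK ?subr_lt0.
- have : phi (phi (phi x)) < phi x := phi_decr x0 gt.
  by rewrite -subr_lt0 => /ltr0_sg ->; rewrite (gtr0_sg (_ : 0 < _ - x)) ?subr_gt0.
Qed.

Definition equilibrium_poly : {poly R} := Poly [:: d; c; b; a; -1].

Lemma equilibrium_polyE x : 0 < x -> equilibrium_poly.[x] = x ^+ 3 * (phi x - x).
Proof. by move=> x0; rewrite horner_Poly /= phiE; field; rewrite gt_eqF. Qed.

Definition period2_poly : {poly R} := equilibrium_poly * Gpoly a b c d.

Lemma period2_polyE x : 0 < x -> period2_poly.[x] = (phi (phi x) - x) * numer x ^+ 3.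
Proof.
move=> x0; have nx := gt_eqF (numer_gt0 x0).
rewrite /period2_poly hornerM !horner_Poly /= !phiE.
by field; rewrite nx gt_eqF.
Qed.

Lemma sgr_period2_poly x : 0 < x -> Num.sg period2_poly.[x] = Num.sg (phi (phi x) - x).
Proof.
by move=> x0; rewrite period2_polyE // sgrM (gtr0_sg (exprn_gt0 _ (numer_gt0 x0))) mulr1.
Qed.

Lemma root_period2_poly x : 0 < x -> root period2_poly x = (phi (phi x) == x).
Proof. by move=> x0; rewrite /root -sgr_eq0 sgr_period2_poly // sgr_eq0 subr_eq0. Qed.

Lemma phi2_lt x : phi a < x -> phi (phi x) < x.
Proof.
move=> ax; have x0 : 0 < x := lt_trans (phi_gt0 a_gt0) ax.
exact: lt_trans (phi_decr a_gt0 (phi_gt x0)) ax.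
Qed.

Lemma period2_poly_neq0 : period2_poly != 0.
Proof.
pose z := phi a + 1; have az : phi a < z by rewrite /z ltrDl.
apply/eqP => S0; have := phi2_lt az.
have : root period2_poly z by rewrite S0 root0.
by rewrite root_period2_poly ?(lt_trans (phi_gt0 a_gt0) az) // => /eqP ->; rewrite ltxx.
Qed.

Definition phi2_sign (i : interval R) (s : R) :=
  {in i, forall x, Num.sg (phi (phi x) - x) = s}.

Lemma phi2_sign_const (i : interval R) x :
  {in i, forall w, 0 < w /\ phi (phi w) != w} -> x \in i ->
  phi2_sign i (Num.sg (phi (phi x) - x)).
Proof.
move=> i_fix x_in w w_in; have [x0 _] := i_fix x x_in; have [w0 _] := i_fix w w_in.
rewrite -!sgr_period2_poly //; apply: polyrN0_itv x_in w_in => v v_in.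
by have [v0 nfix] := i_fix v v_in; rewrite root_period2_poly.
Qed.

Lemma phi2_sign_tail l : 0 <= l ->
  {in `]l, +oo[, forall w, phi (phi w) != w} -> phi2_sign `]l, +oo[ (-1).
Proof.
move=> l0 no_fix; pose z := l + phi a + 1.
have az : phi a < z by rewrite /z; have := phi_gt0 a_gt0; lra.
have z_in : z \in `]l, +oo[ by rewrite in_itv /= andbT /z; have := phi_gt0 a_gt0; lra.
rewrite -(ltr0_sg (_ : phi (phi z) - z < 0)) ?subr_lt0 ?phi2_lt //.
apply: phi2_sign_const z_in => w w_in; split; last exact: no_fix.
by move: w_in; rewrite in_itv /= andbT; apply: le_lt_trans.
Qed.

Lemma phi2_sign_reflect (i j : interval R) s :
  {in j, forall x, 0 < x /\ phi x \in i} -> phi2_sign i s -> phi2_sign j (- s).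
Proof.
move=> ij i_sign x x_in; have [x0 phix_in] := ij x x_in.
by rewrite -(i_sign _ phix_in) sgr_phi2_sub_phi // opprK.
Qed.

Lemma phi2_sign_mirror l r l' r' s : 0 < l' -> phi l' = r -> phi r' = l ->
  phi2_sign `]l, r[ s -> phi2_sign `]l', r'[ (- s).
Proof.
move=> l'0 phil' phir' lr_sign; apply: phi2_sign_reflect lr_sign => x.
rewrite !in_itv /=.
move=> /andP[l'x xr']; have x0 := lt_trans l'0 l'x.
by rewrite -phil' -phir' !phi_decr.
Qed.

Lemma phi2_sign_mirror0 l r : phi l = r -> phi2_sign `]r, +oo[ (-1) -> phi2_sign `]0, l[ 1.
Proof.
move=> phil r_sign; rewrite -[1]opprK; apply: phi2_sign_reflect r_sign => x.
rewrite !in_itv /= andbT.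
by move=> /andP[x0 xl]; rewrite -phil phi_decr.
Qed.

Hypothesis G_odd : no_even_mult_root (Gpoly a b c d).

Lemma phi2_sign_flip l z w r s : 0 <= l -> l < z -> z < r -> two_cycle phi z w ->
  {in `]l, z[, forall y, phi (phi y) != y} -> {in `]z, r[, forall y, phi (phi y) != y} ->
  phi2_sign `]l, z[ s -> phi2_sign `]z, r[ (- s).
Proof.
move=> l0 lz zr [z0 [_ [zw [phiz phiw]]]] no_fix_l no_fix_r left_sign y.
rewrite in_itv /= => /andP[zy yr]; pose x := (l + z) / 2.
have [lx xz] : l < x /\ x < z by rewrite /x; split; lra.
have [x0 y0] : 0 < x /\ 0 < y by split; lra.
have Kz : ~~ root equilibrium_poly z.
  rewrite /root equilibrium_polyE // mulf_neq0 ?expf_neq0 ?(gt_eqF z0) //.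
  by rewrite subr_eq0 phiz eq_sym; apply/eqP.
have odd_mup : odd (mup z period2_poly).
  rewrite mupMr //; apply: G_odd; move: Kz.
  have : root period2_poly z by rewrite root_period2_poly // phiz phiw.
  by rewrite rootM => /orP[->|].
have roots : {in `]l, r[, forall v, v != z -> ~~ root period2_poly v}.
  move=> v; rewrite in_itv /= => /andP[lv vr] vz; have v0 := le_lt_trans l0 lv.
  rewrite root_period2_poly //; case: (ltgtP v z) vz => // [vz|zv] _.
    by rewrite no_fix_l // in_itv /= lv.
  by rewrite no_fix_r // in_itv /= zv.
have := sgr_horner_odd_root period2_poly_neq0 odd_mup roots lx xz zy yr.
rewrite !sgr_period2_poly // left_sign ?in_itv /= ?lx // => ->.
by rewrite opprK.
Qed.

Variables (tbar : R) (t : nat -> R).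
Hypothesis tbar_eq : equilibrium phi tbar.
Hypothesis t0_gt0 : 0 < t 0%N.
Hypothesis tS : forall n, t n.+1 = phi (t n).

Local Notation t_even := (fun n => t (2 * n)%N).

Lemma phi2_fixed_cases w :
  0 < w -> phi (phi w) = w -> w = tbar \/ two_cycle phi w (phi w).
Proof.
move=> w0 ww; have [tbar0 phit] := tbar_eq.
have [phiw|phiw] := eqVneq (phi w) w; last first.
  by right; do !split=> //; [exact: phi_gt0 | apply/eqP; rewrite eq_sym].
left; case: (ltgtP w tbar) => // lt.
  by have := phi_decr w0 lt; rewrite phiw phit; lra.
by have := phi_decr tbar0 lt; rewrite phiw phit; lra.
Qed.

Lemma t_even_cvg l L r : 0 <= l -> l < t 0%N < r -> l < L < r -> phi (phi L) = L ->
  phi2_sign `]l, L[ 1 -> phi2_sign `]L, r[ (-1) -> t_even @ \oo --> L.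
Proof.
move=> l0 t0_in L_in fixL left_sign right_sign.
apply: (@iterate_cvg_attractor _ (fun x => phi (phi x)) _ l L r) => //.
- by move=> n; rewrite mulnS add2n !tS.
- by move=> x y lx xy yr; apply: phi2_le => //; apply: le_lt_trans lx.
- by move=> x /andP[lx _]; apply: phi2_continuous; apply: le_lt_trans lx.
- by move=> x lxL; rewrite -subr_gt0 -sgr_cp0 left_sign.
- by move=> x Lxr; rewrite -subr_lt0 -sgr_cp0 right_sign.
Qed.

Lemma t_even_start L : t 0%N = L -> phi (phi L) = L -> t_even @ \oo --> L.
Proof.
move=> t0 fixL; have -> : t_even = fun=> L.
  by apply/funext; elim=> // n IH; rewrite mulnS add2n !tS IH.
exact: cvg_cst.
Qed.

Lemma conv_cycle_even p q : two_cycle phi p q -> t_even @ \oo --> p -> conv_cycle t p q.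
Proof.
move=> [p0 [_ [_ [phip _]]]] evp; left; split=> //.
rewrite -phip (_ : (fun n => t (2 * n).+1) = phi \o t_even); last first.
  by apply/funext => n; rewrite /= tS.
exact: cvg_comp evp (phi_continuous p0).
Qed.

Lemma cvg_equilibrium_even : t_even @ \oo --> tbar -> t @ \oo --> tbar.
Proof.
have [tbar0 phit] := tbar_eq; move=> ev; apply: cvg_even_odd => //.
rewrite -phit (_ : (fun n => t (2 * n).+1) = phi \o t_even); last first.
  by apply/funext => n; rewrite /= tS.
exact: cvg_comp ev (phi_continuous tbar0).
Qed.

Lemma tbar_fix2 : phi (phi tbar) = tbar.
Proof. by have [_ phit] := tbar_eq; rewrite !phit. Qed.

Lemma conv_cycle_basin l p q r : 0 <= l -> l < t 0%N < r -> l < p < r ->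
  two_cycle phi p q -> phi2_sign `]l, p[ 1 -> phi2_sign `]p, r[ (-1) -> conv_cycle t p q.
Proof.
move=> l0 t0_in p_in pq left_sign right_sign; apply: (conv_cycle_even pq).
exact: t_even_cvg t0_in p_in (two_cycle_fix2 pq) left_sign right_sign.
Qed.

Lemma conv_cycle_basin_up l p q : 0 <= l -> l < t 0%N -> l < p ->
  two_cycle phi p q -> phi2_sign `]l, p[ 1 -> phi2_sign `]p, +oo[ (-1) -> conv_cycle t p q.
Proof.
move=> l0 lt0 lp pq left_sign right_sign; have [p0 _] := pq.
apply: (conv_cycle_basin (r := t 0%N + p)) pq left_sign _ => //.
- by rewrite lt0 ltrDl.
- by rewrite lp ltrDr.
- by apply: sub_in1 right_sign => x; rewrite !in_itv /= andbT => /andP[].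
Qed.

Lemma equilibrium_basin l r : 0 <= l -> l < t 0%N < r -> l < tbar < r ->
  phi2_sign `]l, tbar[ 1 -> phi2_sign `]tbar, r[ (-1) -> t @ \oo --> tbar.
Proof.
move=> l0 t0_in tbar_in left_sign right_sign; apply: cvg_equilibrium_even.
exact: t_even_cvg t0_in tbar_in tbar_fix2 left_sign right_sign.
Qed.

Lemma conv_cycle_start p q : two_cycle phi p q -> t 0%N = p \/ t 0%N = q -> conv_cycle t p q.
Proof.
move=> pq [t0p|t0q]; first exact: conv_cycle_even pq (t_even_start t0p (two_cycle_fix2 pq)).
apply/conv_cycleC; have qp := two_cycleC pq.
exact: conv_cycle_even qp (t_even_start t0q (two_cycle_fix2 qp)).
Qed.

Lemma equilibrium_start : t 0%N = tbar -> t @ \oo --> tbar.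
Proof. by move=> t0; apply: cvg_equilibrium_even (t_even_start t0 tbar_fix2). Qed.

Lemma no_cycle_cvg : (forall p q, ~ two_cycle phi p q) -> t @ \oo --> tbar.
Proof.
move=> no_cycle; have [tbar0 phit] := tbar_eq.
have right_sign : phi2_sign `]tbar, +oo[ (-1).
  apply: phi2_sign_tail (ltW tbar0) _ => w; rewrite in_itv /= andbT => tw.
  have w0 := lt_trans tbar0 tw; apply/eqP => /(phi2_fixed_cases w0) [wt|/no_cycle //].
  by move: tw; rewrite wt ltxx.
have left_sign := phi2_sign_mirror0 phit right_sign.
apply: (equilibrium_basin (l := 0) (r := t 0%N + tbar)) left_sign _ => //.
- by rewrite t0_gt0 ltrDl.
- by rewrite tbar0 ltrDr.
- by apply: sub_in1 right_sign => x; rewrite !in_itv /= andbT => /andP[].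
Qed.

Lemma outer_cycle_cvg p q p' q' : two_cycle phi p q -> 0 < p' -> phi p' = q' -> phi q' = p' ->
  p < p' -> q' < q -> phi2_sign `]q, +oo[ (-1) -> phi2_sign `]p, p'[ (-1) ->
  ~ (p' <= t 0%N <= q') -> conv_cycle t p q.
Proof.
move=> pq p'0 phip' phiq' pp' q'q right_sign inner_sign t0_out.
have [p0 [q0 [_ [phip phiq]]]] := pq; have q'0 : 0 < q' by rewrite -phip' phi_gt0.
have [t0p'|p't0] := ltP (t 0%N) p'.
  have left_sign := phi2_sign_mirror0 phip right_sign.
  by apply: (conv_cycle_basin (l := 0) (r := p')) pq left_sign inner_sign; rewrite ?lexx ?t0_gt0 ?p0.
have q't0 : q' < t 0%N by rewrite ltNge; apply: contra_notN t0_out => ->; rewrite p't0.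
apply/conv_cycleC/(conv_cycle_basin_up (ltW q'0) q't0 q'q (two_cycleC pq) _ right_sign).
by rewrite -[1]opprK; apply: phi2_sign_mirror q'0 phiq' phiq inner_sign.
Qed.

Lemma one_cycle_cvg p q : p < tbar < q ->
  (forall x y, two_cycle phi x y <-> same_cycle p q x y) ->
  (t 0%N <> tbar -> conv_cycle t p q) /\ (t 0%N = tbar -> t @ \oo --> tbar).
Proof.
move=> /andP[pt tq] cycles; have [tbar0 phit] := tbar_eq.
have pq : two_cycle phi p q by apply/cycles; left.
have [p0 [q0 [_ [phip _]]]] := pq.
have fixed w : phi (phi w) = w -> w <= 0 \/ w = tbar \/ w = p \/ w = q.
  move=> ww; have [|w0] := lerP w 0; [by left | right].
  by case: (phi2_fixed_cases w0 ww) => [|/cycles]; rewrite /same_cycle; tauto.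
have right_sign : phi2_sign `]q, +oo[ (-1).
  apply: phi2_sign_tail (ltW q0) _ => w; rewrite in_itv /= andbT => qw.
  by apply/eqP => /fixed; lra.
have inner_sign : phi2_sign `]p, tbar[ (-1).
  apply: (phi2_sign_flip (lexx 0) p0 pt pq _ _ (phi2_sign_mirror0 phip right_sign)).
    by move=> w; rewrite in_itv /= => /andP[w0 wp]; apply/eqP => /fixed; lra.
  by move=> w; rewrite in_itv /= => /andP[pw wt]; apply/eqP => /fixed; lra.
split=> [t0_ne|]; last exact: equilibrium_start.
apply: (outer_cycle_cvg pq tbar0 phit phit pt tq right_sign inner_sign).
by move=> t0E; apply: t0_ne; apply/eqP; rewrite eq_le andbC.
Qed.

Lemma two_cycles_cvg p1 q1 p2 q2 : p1 < p2 -> p2 < tbar -> tbar < q2 -> q2 < q1 ->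
  (forall x y, two_cycle phi x y <-> same_cycle p1 q1 x y \/ same_cycle p2 q2 x y) ->
  [/\ (p2 < t 0%N < q2 -> t @ \oo --> tbar),
      (t 0%N = p2 \/ t 0%N = q2 -> conv_cycle t p2 q2) &
      (~ (p2 <= t 0%N <= q2) -> conv_cycle t p1 q1)].
Proof.
move=> p12 p2t tq2 q21 cycles; have [tbar0 phit] := tbar_eq.
have c1 : two_cycle phi p1 q1 by apply/cycles; left; left.
have c2 : two_cycle phi p2 q2 by apply/cycles; right; left.
have [p10 [q10 [_ [phip1 _]]]] := c1; have [p20 [_ [_ [phip2 phiq2]]]] := c2.
have fixed w : phi (phi w) = w -> w <= 0 \/ w = tbar \/ w = p1 \/ w = q1 \/ w = p2 \/ w = q2.
  move=> ww; have [|w0] := lerP w 0; [by left | right].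
  by case: (phi2_fixed_cases w0 ww) => [|/cycles]; rewrite /same_cycle; tauto.
have s1 : phi2_sign `]q1, +oo[ (-1).
  apply: phi2_sign_tail (ltW q10) _ => w; rewrite in_itv /= andbT => qw.
  by apply/eqP => /fixed; lra.
have nofix12 : {in `]p1, p2[, forall w, phi (phi w) != w}.
  by move=> w; rewrite in_itv /= => /andP[pw wp]; apply/eqP => /fixed; lra.
have s12 : phi2_sign `]p1, p2[ (-1).
  apply: (phi2_sign_flip (lexx 0) p10 p12 c1 _ nofix12 (phi2_sign_mirror0 phip1 s1)).
  by move=> w; rewrite in_itv /= => /andP[w0 wp]; apply/eqP => /fixed; lra.
have s2t : phi2_sign `]p2, tbar[ 1.
  rewrite -[1]opprK; apply: (phi2_sign_flip (ltW p10) p12 p2t c2 nofix12 _ s12).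
  by move=> w; rewrite in_itv /= => /andP[pw wt]; apply/eqP => /fixed; lra.
have st2 : phi2_sign `]tbar, q2[ (-1) := phi2_sign_mirror tbar0 phit phiq2 s2t.
split.
- by move=> t0_in; apply: (equilibrium_basin (ltW p20) t0_in _ s2t st2); rewrite p2t.
- exact: conv_cycle_start c2.
- exact: outer_cycle_cvg c1 p20 phip2 phiq2 p12 q21 s1 s12.
Qed.

Lemma three_cycles_cvg p1 q1 p2 q2 p3 q3 : p1 < p2 -> p2 < p3 -> p3 < tbar ->
  tbar < q3 -> q3 < q2 -> q2 < q1 ->
  (forall x y, two_cycle phi x y <->
     [\/ same_cycle p1 q1 x y, same_cycle p2 q2 x y | same_cycle p3 q3 x y]) ->
  [/\ (p2 < t 0%N < q2 -> t 0%N <> tbar -> conv_cycle t p3 q3),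
      (t 0%N = tbar -> t @ \oo --> tbar),
      (t 0%N = p2 \/ t 0%N = q2 -> conv_cycle t p2 q2) &
      (~ (p2 <= t 0%N <= q2) -> conv_cycle t p1 q1)].
Proof.
move=> p12 p23 p3t tq3 q32 q21 cycles; have [tbar0 phit] := tbar_eq.
have c1 : two_cycle phi p1 q1 by apply/cycles; constructor 1; left.
have c2 : two_cycle phi p2 q2 by apply/cycles; constructor 2; left.
have c3 : two_cycle phi p3 q3 by apply/cycles; constructor 3; left.
have [p10 [q10 [_ [phip1 _]]]] := c1; have [p20 [_ [_ [phip2 phiq2]]]] := c2.
have [p30 [_ [_ [_ phiq3]]]] := c3.
have fixed w : phi (phi w) = w ->
    w <= 0 \/ w = tbar \/ w = p1 \/ w = q1 \/ w = p2 \/ w = q2 \/ w = p3 \/ w = q3.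
  move=> ww; have [|w0] := lerP w 0; [by left | right].
  by case: (phi2_fixed_cases w0 ww) => [|/cycles [] ]; rewrite /same_cycle; tauto.
have s1 : phi2_sign `]q1, +oo[ (-1).
  apply: phi2_sign_tail (ltW q10) _ => w; rewrite in_itv /= andbT => qw.
  by apply/eqP => /fixed; lra.
have nofix12 : {in `]p1, p2[, forall w, phi (phi w) != w}.
  by move=> w; rewrite in_itv /= => /andP[pw wp]; apply/eqP => /fixed; lra.
have nofix23 : {in `]p2, p3[, forall w, phi (phi w) != w}.
  by move=> w; rewrite in_itv /= => /andP[pw wp]; apply/eqP => /fixed; lra.
have s12 : phi2_sign `]p1, p2[ (-1).
  apply: (phi2_sign_flip (lexx 0) p10 p12 c1 _ nofix12 (phi2_sign_mirror0 phip1 s1)).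
  by move=> w; rewrite in_itv /= => /andP[w0 wp]; apply/eqP => /fixed; lra.
have s23 : phi2_sign `]p2, p3[ 1.
  by rewrite -[1]opprK; apply: (phi2_sign_flip (ltW p10) p12 p23 c2 nofix12 nofix23 s12).
have s3t : phi2_sign `]p3, tbar[ (-1).
  apply: (phi2_sign_flip (ltW p20) p23 p3t c3 nofix23 _ s23).
  by move=> w; rewrite in_itv /= => /andP[pw wt]; apply/eqP => /fixed; lra.
have st3 : phi2_sign `]tbar, q3[ 1.
  by rewrite -[1]opprK; apply: phi2_sign_mirror tbar0 phit phiq3 s3t.
have s32 : phi2_sign `]q3, q2[ (-1).
  exact: phi2_sign_mirror (lt_trans tbar0 tq3) phiq3 phiq2 s23.
split.
- move=> /andP[p2t0 t0q2] t0_ne; case: (ltgtP (t 0%N) tbar) => // [t0t|tt0].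
    by apply: (conv_cycle_basin (ltW p20) _ _ c3 s23 s3t); rewrite ?p2t0 ?t0t ?p23 ?p3t.
  apply/conv_cycleC/(conv_cycle_basin (ltW tbar0) _ _ (two_cycleC c3) st3 s32).
    by rewrite tt0 t0q2.
  by rewrite tq3 q32.
- exact: equilibrium_start.
- exact: conv_cycle_start c2.
- exact: outer_cycle_cvg c1 p20 phip2 phiq2 p12 q21 s1 s12.
Qed.

End CubicRationalMap.

Theorem theorem4 (R : realType) (a b c d tbar : R) (t : nat -> R) :
  0 < a -> 0 < b -> 0 < d -> - Num.sqrt (3 * b * d) <= c ->
  equilibrium (phi a b c d) tbar ->
  0 < t 0%N -> (forall n, t n.+1 = phi a b c d (t n)) ->
  no_even_mult_root (Gpoly a b c d) ->
  [/\
   (* (a) *)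
   ((forall p q, ~ two_cycle (phi a b c d) p q) -> t @ \oo --> tbar),
   (* (b) *)
   (forall p q, p < tbar < q ->
      (forall x y, two_cycle (phi a b c d) x y <-> same_cycle p q x y) ->
      (t 0%N <> tbar -> conv_cycle t p q) /\ (t 0%N = tbar -> t @ \oo --> tbar)),
   (* (c) *)
   (forall p1 q1 p2 q2, p1 < p2 -> p2 < tbar -> tbar < q2 -> q2 < q1 ->
      (forall x y, two_cycle (phi a b c d) x y <->
                   same_cycle p1 q1 x y \/ same_cycle p2 q2 x y) ->
      [/\ (p2 < t 0%N < q2 -> t @ \oo --> tbar),
          (t 0%N = p2 \/ t 0%N = q2 -> conv_cycle t p2 q2) &
          (~ (p2 <= t 0%N <= q2) -> conv_cycle t p1 q1)]) &
   (* (d) *)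
   (forall p1 q1 p2 q2 p3 q3, p1 < p2 -> p2 < p3 -> p3 < tbar ->
      tbar < q3 -> q3 < q2 -> q2 < q1 ->
      (forall x y, two_cycle (phi a b c d) x y <->
         [\/ same_cycle p1 q1 x y, same_cycle p2 q2 x y | same_cycle p3 q3 x y]) ->
      [/\ (p2 < t 0%N < q2 -> t 0%N <> tbar -> conv_cycle t p3 q3),
          (t 0%N = tbar -> t @ \oo --> tbar),
          (t 0%N = p2 \/ t 0%N = q2 -> conv_cycle t p2 q2) &
          (~ (p2 <= t 0%N <= q2) -> conv_cycle t p1 q1)])].
Proof.
move=> a0 b0 d0 c_ge_sqrt tbar_eq t0 tS G_odd.
have c_ge : 0 <= c \/ c ^+ 2 <= 3 * b * d.
  by apply: ge_Nsqrt_cases c_ge_sqrt; rewrite !mulr_ge0 ?ltW.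
split.
- exact: (no_cycle_cvg a0 b0 d0 c_ge tbar_eq t0 tS).
- exact: (one_cycle_cvg a0 b0 d0 c_ge G_odd tbar_eq t0 tS).
- exact: (two_cycles_cvg a0 b0 d0 c_ge G_odd tbar_eq t0 tS).
- exact: (three_cycles_cvg a0 b0 d0 c_ge G_odd tbar_eq t0 tS).
Qed.
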